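(* Let $F:\mathbb R^m\to\mathbb R^r$, $C\in\mathbb R^{r\times n}$ with nonzero columns, $\Theta(x,y)=\frac12\|F(x)-Cy\|^2$, and fix $x$. Consider the double greedy procedure: set $\underline y^0=\mathbf 0$, $\overline y^0=\mathbf 1$; for $k=1,\dots,n$ let $a=\Theta(x,\underline y^{k-1}+\mathbf e_k)-\Theta(x,\underline y^{k-1})$ and $b=\Theta(x,\overline y^{k-1}-\mathbf e_k)-\Theta(x,\overline y^{k-1})$; if $a\ge b$ set $\underline y^k=\underline y^{k-1}+\mathbf e_k$, $\overline y^k=\overline y^{k-1}$, otherwise set $\underline y^k=\underline y^{k-1}$, $\overline y^k=\overline y^{k-1}-\mathbf e_k$; return $\hat y=\underline y^n=\overline y^n$. If $C$ is obtuse, then $\Theta(x,\hat y)\ge\frac13\max_{y\in\{0,1\}^n}\Theta(x,y)$. If $C$ has mutually orthogonal columns, then $\hat y$ is a maximizer of $\Theta(x,\cdot)$ over $\{0,1\}^n$.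
   Context: $C=(c_1,\dots,c_n)$ is obtuse if $c_i^\top c_j\le0$ for all $i\neq j$. $\mathbf e_k$ is the $k$-th standard unit vector, $\mathbf 0,\mathbf 1$ the all-zeros and all-ones vectors in $\mathbb R^n$. *)

From HB Require Import structures.
From mathcomp Require Import all_boot all_order all_algebra.
Set Implicit Arguments. Unset Strict Implicit. Unset Printing Implicit Defensive.
Import Order.TTheory GRing.Theory Num.Theory.
Local Open Scope ring_scope.

Definition sqnorm (R : realFieldType) (r : nat) (v : 'cV[R]_r) : R :=
  \sum_(i < r) (v i 0) ^+ 2.

Definition Theta (R : realFieldType) (m r n : nat)
  (F : 'cV[R]_m -> 'cV[R]_r) (C : 'M[R]_(r, n)) (x : 'cV[R]_m) (y : 'cV[R]_n) : R :=
  2^-1 * sqnorm (F x - C *m y).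

(* Standard unit vector e_{k+1} (0-based index k). *)
Definition unitv (R : realFieldType) (n k : nat) : 'cV[R]_n :=
  \col_(i < n) (if nat_of_ord i == k then 1 else 0).

Definition coldot (R : realFieldType) (r n : nat) (C : 'M[R]_(r, n)) (i j : 'I_n) : R :=
  \sum_(l < r) C l i * C l j.

Definition obtuse (R : realFieldType) (r n : nat) (C : 'M[R]_(r, n)) : Prop :=
  forall i j : 'I_n, i != j -> coldot C i j <= 0.

Definition orthogonal_cols (R : realFieldType) (r n : nat) (C : 'M[R]_(r, n)) : Prop :=
  forall i j : 'I_n, i != j -> coldot C i j = 0.

Definition nonzero_cols (R : realFieldType) (r n : nat) (C : 'M[R]_(r, n)) : Prop :=
  forall j : 'I_n, col j C != 0.

Definition binary (R : realFieldType) (n : nat) (y : 'cV[R]_n) : Prop :=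
  forall i : 'I_n, y i 0 = 0 \/ y i 0 = 1.

Fixpoint double_greedy (R : realFieldType) (m r n : nat)
  (F : 'cV[R]_m -> 'cV[R]_r) (C : 'M[R]_(r, n)) (x : 'cV[R]_m) (k : nat)
  : 'cV[R]_n * 'cV[R]_n :=
  match k with
  | 0 => (0, const_mx 1)
  | k'.+1 =>
      let p := double_greedy F C x k' in
      let lo := p.1 in let hi := p.2 in
      let e := unitv R n k' in   (* e_k with k = k'+1 *)
      let a := Theta F C x (lo + e) - Theta F C x lo in
      let b := Theta F C x (hi - e) - Theta F C x hi in
      if b <= a then (lo + e, hi) else (lo, hi - e)
  end.

Definition dg_output (R : realFieldType) (m r n : nat)
  (F : 'cV[R]_m -> 'cV[R]_r) (C : 'M[R]_(r, n)) (x : 'cV[R]_m) : 'cV[R]_n :=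
  (double_greedy F C x n).1.

From HB Require Import structures.
From mathcomp Require Import all_boot all_order all_algebra.
From mathcomp Require Import ring lra.

Set Implicit Arguments.
Unset Strict Implicit.
Unset Printing Implicit Defensive.

Import Order.TTheory GRing.Theory Num.Theory.
Local Open Scope ring_scope.

(* For f = Theta(x, .), the marginal gain of raising coordinate k of v is
   f(v + e_k) - f(v) = sum_j v_j c_j.c_k + const_k, so for obtuse C it
   can only decrease when the other coordinates grow (diminishing returns), and
   for orthogonal columns it does not depend on them at all.  The analysis of
   the deterministic double greedy of Buchbinder, Feldman, Naor and Schwartz
   then applies: let y^k agree with the greedy choices on the first k
   coordinates and with y on the others.  Each step loses
   f(y^k) - f(y^(k+1)) <= (gain of the lower point) + (gain of the upper point),
   and summing gives f(y) - f(yhat) <= 2 f(yhat) - f(0) - f(1) <= 2 f(yhat).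
   Without interaction between coordinates every step is optimal, so
   f(y^k) never decreases. *)

(* One step of the double greedy: m0, m and m1 are the gains of coordinate k
   at the lower point, at the hybrid point and at the upper point, each with
   coordinate k cleared, c is the target's k-th coordinate and the boolean is
   the greedy choice. *)
Lemma double_greedy_step_bound (R : realFieldType) (m1 m m0 c : R) :
  c = 0 \/ c = 1 -> m1 <= m <= m0 ->
  (c - (- m1 <= m0)%R%:R) * m <=
    - ((0 - (- m1 <= m0)%R%:R) * m0) - ((1 - (- m1 <= m0)%R%:R) * m1).
Proof.
by move=> c01 /andP[m1m mm0]; case: (lerP (- m1) m0) => h /=; case: c01 => ->; nra.
Qed.

Lemma double_greedy_step_modular (R : realFieldType) (a c : R) :
  c = 0 \/ c = 1 -> (c - (- a <= a)%R%:R) * a <= 0.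
Proof. by move=> c01; case: (lerP (- a) a) => h /=; case: c01 => ->; nra. Qed.

Section DoubleGreedy.
Variables (R : realFieldType) (n : nat) (f : 'cV[R]_n -> R).

Local Notation e := (unitv R n).

Definition marginal (k : nat) (v : 'cV[R]_n) : R := f (v + e k) - f v.

Definition dr_submodular : Prop :=
  forall (k : 'I_n) (u v : 'cV[R]_n),
    (forall i, u i 0 <= v i 0) -> u k 0 = v k 0 -> marginal k v <= marginal k u.

Definition dr_modular : Prop :=
  forall (k : 'I_n) (u v : 'cV[R]_n), u k 0 = v k 0 -> marginal k u = marginal k v.

Fixpoint dgreedy (k : nat) : 'cV[R]_n * 'cV[R]_n :=
  if k is k'.+1 then
    let p := dgreedy k' in
    if f (p.2 - e k') - f p.2 <= marginal k' p.1
    then (p.1 + e k', p.2) else (p.1, p.2 - e k')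
  else (0, const_mx 1).

Definition dgreedy_take (k : nat) : bool :=
  f ((dgreedy k).2 - e k) - f (dgreedy k).2 <= marginal k (dgreedy k).1.

Lemma dgreedyS k :
  dgreedy k.+1 = if dgreedy_take k then ((dgreedy k).1 + e k, (dgreedy k).2)
                 else ((dgreedy k).1, (dgreedy k).2 - e k).
Proof. by []. Qed.

Definition hybrid (y : 'cV[R]_n) (k : nat) : 'cV[R]_n :=
  \col_i (if (i < k)%N then (dgreedy_take i)%:R else y i 0).

Definition pinned (y : 'cV[R]_n) (k : nat) : 'cV[R]_n :=
  \col_i (if (i < k)%N then (dgreedy_take i)%:R
          else if i == k :> nat then 0 else y i 0).

Lemma dgreedy_hybrid k : dgreedy k = (hybrid 0 k, hybrid (const_mx 1) k).
Proof.
elim: k => [|k IH]; first by congr pair; apply/matrixP => i j; rewrite !mxE.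
rewrite dgreedyS IH /=; case: ifP => take; congr pair;
  apply/matrixP => i j; rewrite !mxE ltnS;
  by case: ltngtP => [_|_|->]; rewrite ?take ?(addr0, subr0, add0r, subrr).
Qed.

Lemma hybrid0 y : hybrid y 0 = y.
Proof. by apply/matrixP => i j; rewrite !mxE (ord1 j). Qed.

Lemma hybrid_end y z : hybrid y n = hybrid z n.
Proof. by apply/matrixP => i j; rewrite !mxE ltn_ord. Qed.

Lemma hybrid_end_binary y : binary (hybrid y n).
Proof. by move=> i; rewrite mxE ltn_ord; case: dgreedy_take; [right | left]. Qed.

Lemma hybrid_pinned (k : 'I_n) (y : 'cV[R]_n) : hybrid y k = pinned y k + y k 0 *: e k.
Proof.
apply/matrixP => i j; rewrite (ord1 j) !mxE.
by case: ltngtP => [_|_|/val_inj ->]; rewrite ?mulr0 ?addr0 ?mulr1 ?add0r.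
Qed.

Lemma hybridS_pinned k (y : 'cV[R]_n) :
  hybrid y k.+1 = pinned y k + (dgreedy_take k)%:R *: e k.
Proof.
apply/matrixP => i j; rewrite !mxE ltnS.
by case: ltngtP => [_|_|->]; rewrite ?mulr0 ?addr0 ?mulr1 ?add0r.
Qed.

Lemma pinned_at (k : 'I_n) (y : 'cV[R]_n) : pinned y k k 0 = 0.
Proof. by rewrite mxE ltnn eqxx. Qed.

Lemma pinned_le k (y z : 'cV[R]_n) :
  (forall i, y i 0 <= z i 0) -> forall i, pinned y k i 0 <= pinned z k i 0.
Proof. by move=> yz i; rewrite !mxE; case: ifP => //; case: ifP. Qed.

Lemma add_binary_unitv k v c :
  c = 0 \/ c = 1 -> f (v + c *: e k) = f v + c * marginal k v.
Proof.
by case=> ->; rewrite ?scale0r ?addr0 ?mul0r ?addr0 //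
  scale1r mul1r [f v + _]addrC subrK.
Qed.

Lemma dgreedy_take_binary k :
  (dgreedy_take k)%:R = 0 :> R \/ (dgreedy_take k)%:R = 1 :> R.
Proof. by case: dgreedy_take; [right | left]. Qed.

Lemma hybrid_loss (k : 'I_n) (y : 'cV[R]_n) : y k 0 = 0 \/ y k 0 = 1 ->
  f (hybrid y k) - f (hybrid y k.+1) =
  (y k 0 - (dgreedy_take k)%:R) * marginal k (pinned y k).
Proof.
move=> yk; rewrite {1}hybrid_pinned hybridS_pinned.
by rewrite !add_binary_unitv //; [ring | apply: dgreedy_take_binary].
Qed.

Lemma dgreedy_take_pinned (k : 'I_n) :
  dgreedy_take k = (- marginal k (pinned (const_mx 1) k) <= marginal k (pinned 0 k)).
Proof.
rewrite /dgreedy_take dgreedy_hybrid /=.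
rewrite (hybrid_pinned k 0) (hybrid_pinned k (const_mx 1)).
by rewrite !mxE scale0r addr0 scale1r addrK /marginal opprB.
Qed.

Lemma hybrid_step_submodular (k : 'I_n) (y : 'cV[R]_n) :
  dr_submodular -> binary y ->
  f (hybrid y k) - f (hybrid y k.+1) <=
  (f (hybrid 0 k.+1) - f (hybrid 0 k)) +
  (f (hybrid (const_mx 1) k.+1) - f (hybrid (const_mx 1) k)).
Proof.
move=> sub yb.
rewrite -[f (hybrid 0 _) - _]opprB -[f (hybrid (const_mx 1) _) - _]opprB.
rewrite !hybrid_loss ?mxE; [|by right|by left|exact: yb].
rewrite dgreedy_take_pinned; apply: double_greedy_step_bound (yb k) _.
by apply/andP; split; apply: sub; rewrite ?pinned_at // => i;
  apply: pinned_le => j; rewrite mxE; case: (yb j) => ->.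
Qed.

Lemma hybrid_step_modular (k : 'I_n) (y : 'cV[R]_n) : dr_modular -> binary y ->
  f (hybrid y k) <= f (hybrid y k.+1).
Proof.
move=> mod yb; rewrite -subr_le0 hybrid_loss // dgreedy_take_pinned.
rewrite !(mod k (pinned _ k) (pinned y k)) ?pinned_at //.
exact: double_greedy_step_modular.
Qed.

Lemma sum_hybrid_gain (y : 'cV[R]_n) :
  f (hybrid y n) - f y = \sum_(k < n) (f (hybrid y k.+1) - f (hybrid y k)).
Proof.
rewrite -[in f y](hybrid0 y).
by rewrite -(@telescope_sumr _ 0 n (fun k => f (hybrid y k))) ?big_mkord.
Qed.

Theorem dgreedy_one_third (y : 'cV[R]_n) :
  dr_submodular -> (forall v, 0 <= f v) -> binary y -> 3^-1 * f y <= f (dgreedy n).1.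
Proof.
move=> sub f_ge0 yb.
have loss : f y - f (hybrid y n) <=
    (f (hybrid 0 n) - f 0) + (f (hybrid (const_mx 1) n) - f (const_mx 1)).
  rewrite -[f y - _]opprB !sum_hybrid_gain -big_split -sumrN /=.
  by apply: ler_sum => k _; rewrite opprB; exact: hybrid_step_submodular.
rewrite dgreedy_hybrid /= (hybrid_end 0 y).
move: loss; rewrite (hybrid_end 0 y) (hybrid_end (const_mx 1) y).
by have := f_ge0 0; have := f_ge0 (const_mx 1); lra.
Qed.

Lemma dgreedy_binary : binary (dgreedy n).1.
Proof. by rewrite dgreedy_hybrid; apply: hybrid_end_binary. Qed.

Theorem dgreedy_modular_optimal (y : 'cV[R]_n) :
  dr_modular -> binary y -> f y <= f (dgreedy n).1.
Proof.
move=> mod yb; rewrite dgreedy_hybrid /= (hybrid_end 0 y) -subr_ge0 sum_hybrid_gain.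
by apply: sumr_ge0 => k _; rewrite subr_ge0; exact: hybrid_step_modular.
Qed.

End DoubleGreedy.

Section Theta.
Variables (R : realFieldType) (m r n : nat).
Variables (F : 'cV[R]_m -> 'cV[R]_r) (C : 'M[R]_(r, n)) (x : 'cV[R]_m).

Lemma mulmx_unitv (k : 'I_n) : C *m unitv R n k = col k C.
Proof.
apply/matrixP => l j; rewrite !mxE (bigD1 k) //= !mxE eqxx mulr1.
rewrite big1 ?addr0 // => i ik.
by rewrite mxE val_eqE (negbTE ik) mulr0.
Qed.

Lemma Theta_marginal (k : 'I_n) (v : 'cV[R]_n) :
  marginal (Theta F C x) k v =
  \sum_j v j 0 * coldot C j k + (2^-1 * coldot C k k - \sum_l F x l 0 * C l k).
Proof.
have mulmx_coldot : \sum_l (C *m v) l 0 * C l k = \sum_j v j 0 * coldot C j k.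
  under eq_bigr do rewrite mxE mulr_suml.
  rewrite exchange_big; apply: eq_bigr => j _; rewrite mulr_sumr.
  by apply: eq_bigr => l _; ring.
rewrite /marginal /Theta /sqnorm mulmxDr mulmx_unitv -mulrBr -sumrB mulr_sumr.
rewrite -mulmx_coldot /coldot mulr_sumr -sumrB -big_split /=.
by apply: eq_bigr => l _; rewrite !mxE; field.
Qed.

Lemma Theta_dr_submodular : obtuse C -> dr_submodular (Theta F C x).
Proof.
move=> obt k u v uv uvk; rewrite !Theta_marginal lerD2r.
apply: ler_sum => j _; case: (eqVneq j k) => [->|jk]; first by rewrite uvk.
exact: ler_wnM2r (obt j k jk) _ _ (uv j).
Qed.

Lemma Theta_dr_modular : orthogonal_cols C -> dr_modular (Theta F C x).
Proof.
move=> orth k u v uvk; rewrite !Theta_marginal; congr (_ + _).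
apply: eq_bigr => j _; case: (eqVneq j k) => [->|jk]; first by rewrite uvk.
by rewrite orth // !mulr0.
Qed.

Lemma Theta_ge0 (y : 'cV[R]_n) : 0 <= Theta F C x y.
Proof.
by rewrite mulr_ge0 ?invr_ge0 ?ler0n // sumr_ge0 // => l _; rewrite sqr_ge0.
Qed.

Lemma double_greedyE k : double_greedy F C x k = dgreedy (Theta F C x) k.
Proof. by elim: k => //= k ->. Qed.

End Theta.

Theorem mainTheorem9 (R : realFieldType) (m r n : nat)
  (F : 'cV[R]_m -> 'cV[R]_r) (C : 'M[R]_(r, n)) (x : 'cV[R]_m) :
  nonzero_cols C ->
  (obtuse C ->
     forall y : 'cV[R]_n, binary y ->
       3^-1 * Theta F C x y <= Theta F C x (dg_output F C x)) /\
  (orthogonal_cols C ->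
     binary (dg_output F C x) /\
     forall y : 'cV[R]_n, binary y ->
       Theta F C x y <= Theta F C x (dg_output F C x)).
Proof.
move=> _; rewrite /dg_output double_greedyE; split=> [obt y yb | orth].
  exact: dgreedy_one_third (Theta_dr_submodular _ _ obt) (Theta_ge0 F C x) yb.
split; first exact: dgreedy_binary.
by move=> y yb; apply: dgreedy_modular_optimal (Theta_dr_modular _ _ orth) yb.
Qed.
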